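(* Let $m>0$, $K\neq0$, and consider the CMC slicing of the Schwarzschild spacetime with integration constant $H=0$ (the case in which the second fundamental form of each slice is isotropic, $K_{ij}=\tfrac13 K g_{ij}$). Then every solution $\sigma_-$ of the ingoing wave phase equation on $(2m,\infty)$ is unbounded as $r\to 2m^+$; i.e. no bounded ingoing wave phase coordinate exists across the event horizon on such slices.
   Context: The CMC-sliced Schwarzschild metric is $ds^2=-(1-2m/r)dt^2+2vP^{-1/2}dt\,dr+r^4P^{-1}dr^2+r^2d\Omega^2$ with $v=Kr^3/3-H$, $P=v^2+(1-2m/r)r^4$, $K$ the mean curvature of the slices $t=$const, $H$ a real constant (here $H=0$). The ingoing wave phase equation is $(1-2m/r)\frac{3}{K}\frac{d\sigma_-}{dr}=vP^{-1/2}+b_-$ with $b_-=-1$ if $K<0$ and $b_-=+1$ if $K>0$. The trace-free part of the second fundamental form of the slices vanishes identically exactly when $H=0$. *)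

From Stdlib Require Import Reals.
Open Scope R_scope.

Definition vfun (K H r : R) : R := K * r ^ 3 / 3 - H.

Definition Pfun (m K H r : R) : R := (vfun K H r) ^ 2 + (1 - 2 * m / r) * r ^ 4.

Definition bminus (K : R) : R := if Rlt_dec K 0 then -1 else 1.

Definition ingoing_phase_solution (m K H : R) (sigma : R -> R) : Prop :=
  forall r : R, 2 * m < r ->
    exists d : R, derivable_pt_lim sigma r d /\
      (1 - 2 * m / r) * (3 / K) * d = vfun K H r / sqrt (Pfun m K H r) + bminus K.

From Stdlib Require Import Reals Lra.
From Coquelicot Require Import Coquelicot.
Open Scope R_scope.

(* For H = 0 the velocity term v = K r^3/3 has the sign of b_-, so the right-hand
   side of the phase equation has the sign of b_- and modulus at least 1.  Solving
   for the derivative gives sigma'(r) >= c/(r - 2m) with c = 2m|K|/3 > 0, so sigma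
   tends to -oo at least logarithmically as r decreases to 2m.  Concretely, sigma drops
   by at least c/2 on every interval [2m + x/2, 2m + x], and n halvings starting
   from a fixed point push it below any bound. *)

Section LogarithmicBlowUp.

Variables (f : R -> R) (a c : R).
Hypothesis c_pos : 0 < c.
Hypothesis deriv_ge :
  forall x, a < x -> exists d, derivable_pt_lim f x d /\ c / (x - a) <= d.

Lemma derivable_pt_lim_Derive x : a < x -> derivable_pt_lim f x (Derive f x).
Proof.
  intros Hx; destruct (deriv_ge x Hx) as [d [Hd _]].
  rewrite (is_derive_unique f x d); [exact Hd | now apply is_derive_Reals].
Qed.

Lemma Derive_ge x : a < x -> c / (x - a) <= Derive f x.
Proof.
  intros Hx; destruct (deriv_ge x Hx) as [d [Hd Hle]].
  rewrite (is_derive_unique f x d); [exact Hle | now apply is_derive_Reals].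
Qed.

Lemma half_interval_increment x : 0 < x -> c / 2 <= f (a + x) - f (a + x / 2).
Proof.
  intros Hx.
  destruct (MVT_cor2 f (Derive f) (a + x / 2) (a + x)) as [xi [Heq Hxi]].
  - lra.
  - intros y Hy; apply derivable_pt_lim_Derive; lra.
  - rewrite Heq.
    assert (Hinv : c / x <= c / (xi - a)).
    { apply Rmult_le_compat_l; [lra|]. apply Rinv_le_contravar; lra. }
    assert (Hxi_ge := Derive_ge xi ltac:(lra)).
    replace (c / 2) with (c / x * (a + x - (a + x / 2))) by (field; lra).
    apply Rmult_le_compat_r; lra.
Qed.

Lemma dyadic_increment x n :
  0 < x -> INR n * (c / 2) <= f (a + x) - f (a + x / 2 ^ n).
Proof.
  intros Hx; induction n as [|n IH].
  - simpl; replace (x / 1) with x by field; lra.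
  - rewrite S_INR.
    assert (H2n : 0 < 2 ^ n) by (apply pow_lt; lra).
    assert (Hstep := half_interval_increment (x / 2 ^ n)
                       ltac:(apply Rdiv_lt_0_compat; lra)).
    replace (x / 2 ^ S n) with (x / 2 ^ n / 2) by (simpl; field; lra).
    lra.
Qed.

Lemma not_bounded_at_right :
  ~ (exists M delta, 0 < delta /\
       forall x, a < x < a + delta -> Rabs (f x) <= M).
Proof.
  intros [M [delta [Hdelta Hbound]]].
  destruct (INR_archimed (c / 2) (2 * M)) as [n Hn]; [lra|].
  assert (Hinc := dyadic_increment (delta / 2) n ltac:(lra)).
  assert (H2n : 1 <= 2 ^ n) by (apply pow_R1_Rle; lra).
  assert (Hpos : 0 < delta / 2 / 2 ^ n) by (apply Rdiv_lt_0_compat; lra).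
  assert (Hle : delta / 2 / 2 ^ n <= delta / 2).
  { apply Rmult_le_reg_r with (2 ^ n); [lra|].
    unfold Rdiv at 1; rewrite Rmult_assoc, Rinv_l by lra. nra. }
  assert (Hnear := Hbound (a + delta / 2 / 2 ^ n) ltac:(lra)).
  assert (Hfar := Hbound (a + delta / 2) ltac:(lra)).
  apply Rabs_le_between in Hnear, Hfar.
  lra.
Qed.

End LogarithmicBlowUp.

Lemma bminus_mul_self K : bminus K * bminus K = 1.
Proof. unfold bminus; destruct (Rlt_dec K 0); lra. Qed.

Lemma bminus_mul_Rabs K : bminus K * K = Rabs K.
Proof.
  unfold bminus, Rabs; destruct (Rlt_dec K 0), (Rcase_abs K); lra.
Qed.

(* The case q = 0 is included: then v / q = 0 in Rocq and the claim is b * b = 1. *)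
Lemma sign_mul_ratio_add_ge1 b v q :
  b * b = 1 -> 0 <= b * v -> 0 <= q -> 1 <= b * (v / q + b).
Proof.
  intros Hb Hv Hq.
  replace (b * (v / q + b)) with (b * v * / q + b * b) by (unfold Rdiv; ring).
  assert (0 <= / q) by (destruct Hq as [Hq|<-]; [left; now apply Rinv_0_lt_compat
                                                | rewrite Rinv_0; lra]).
  rewrite Hb; nra.
Qed.

Lemma phase_derivative_ge m K r d : 0 < m -> K <> 0 -> 2 * m < r ->
  (1 - 2 * m / r) * (3 / K) * d = vfun K 0 r / sqrt (Pfun m K 0 r) + bminus K ->
  Rabs K * (2 * m) / 3 / (r - 2 * m) <= d.
Proof.
  intros Hm HK Hr Heq.
  set (w := vfun K 0 r / sqrt (Pfun m K 0 r) + bminus K) in Heq.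
  assert (Hw : 1 <= bminus K * w).
  { apply sign_mul_ratio_add_ge1; [apply bminus_mul_self | | apply sqrt_pos].
    unfold vfun.
    replace (bminus K * (K * r ^ 3 / 3 - 0)) with (bminus K * K * r ^ 3 / 3)
      by (unfold Rdiv; ring).
    rewrite bminus_mul_Rabs.
    assert (0 <= Rabs K) by apply Rabs_pos.
    assert (0 < r ^ 3) by (apply pow_lt; lra).
    unfold Rdiv; nra. }
  assert (HwK : w * K = bminus K * w * Rabs K).
  { rewrite <- bminus_mul_Rabs, <- (Rmult_1_l (w * K)), <- (bminus_mul_self K).
    ring. }
  assert (Hd : d = w * K * r / (3 * (r - 2 * m))).
  { rewrite <- Heq; field; repeat split; lra. }
  rewrite Hd.
  replace (Rabs K * (2 * m) / 3 / (r - 2 * m))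
    with (Rabs K * (2 * m) / (3 * (r - 2 * m))) by (field; lra).
  apply Rmult_le_compat_r; [left; apply Rinv_0_lt_compat; lra|].
  assert (0 <= Rabs K) by apply Rabs_pos.
  assert (Rabs K <= w * K) by nra.
  nra.
Qed.

Theorem mainTheorem2 (m K : R) (sigma : R -> R) :
  0 < m -> K <> 0 ->
  ingoing_phase_solution m K 0 sigma ->
  ~ (exists M delta : R, 0 < delta /\
       forall r : R, 2 * m < r < 2 * m + delta -> Rabs (sigma r) <= M).
Proof.
  intros Hm HK Hsol.
  apply (not_bounded_at_right sigma (2 * m) (Rabs K * (2 * m) / 3)).
  - assert (0 < Rabs K) by now apply Rabs_pos_lt.
    unfold Rdiv; nra.
  - intros r Hr; destruct (Hsol r Hr) as [d [Hd Heq]].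
    exists d; split; [exact Hd | now apply (phase_derivative_ge m K r d)].
Qed.
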